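(* Assume $\mathsf{MA}(\sigma\text{-centered})$. Let $\kappa<\mathfrak{c}$ be a cardinal. Suppose that for each $\alpha<\kappa$, $\lambda_\alpha<\mathfrak{c}$ is an infinite cardinal and $A_\alpha$, $B_\alpha$ are $\lambda_\alpha$-dense subsets of $2^\omega$, and that $A_\alpha\cap A_\beta=\varnothing$ and $B_\alpha\cap B_\beta=\varnothing$ whenever $\alpha<\beta<\kappa$. Then there exists a homeomorphism $f:2^\omega\to2^\omega$ such that $f[A_\alpha]=B_\alpha$ for every $\alpha<\kappa$.
   Context: For an infinite cardinal $\lambda$, a subset $D$ of a space $X$ is $\lambda$-dense in $X$ if $|D\cap U|=\lambda$ for every non-empty open $U\subseteq X$. $\mathsf{MA}(\sigma\text{-centered})$ is Martin's Axiom restricted to $\sigma$-centered posets. *)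

From Stdlib Require Import List.

Definition card_le (A B : Type) : Prop :=
  exists f : A -> B, forall x y, f x = f y -> x = y.
Definition card_lt (A B : Type) : Prop := card_le A B /\ ~ card_le B A.
Definition equinumerous (A B : Type) : Prop :=
  exists f : A -> B, (forall x y, f x = f y -> x = y) /\ (forall y, exists x, f x = y).
Definition infinite_type (A : Type) : Prop := card_le nat A.

Definition Cantor := nat -> bool.
Definition agree (n : nat) (x y : Cantor) : Prop := forall i, i < n -> x i = y i.
Definition is_open (U : Cantor -> Prop) : Prop :=
  forall x, U x -> exists n, forall y, agree n x y -> U y.
Definition continuous (f : Cantor -> Cantor) : Prop :=
  forall U, is_open U -> is_open (fun x => U (f x)).
Definition homeomorphism (f : Cantor -> Cantor) : Prop :=
  continuous f /\ exists g : Cantor -> Cantor,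
    continuous g /\ (forall x, g (f x) = x) /\ (forall y, f (g y) = y).

(** D is lambda-dense in 2^omega (lambda given as a type L):
    |D ∩ U| = lambda for every non-empty open U. *)
Definition dense_card (L : Type) (D : Cantor -> Prop) : Prop :=
  forall U, is_open U -> (exists x, U x) ->
    equinumerous {x : Cantor | D x /\ U x} L.

Definition image (f : Cantor -> Cantor) (A : Cantor -> Prop) : Cantor -> Prop :=
  fun y => exists x, A x /\ f x = y.

(** Posets, sigma-centered posets, dense sets, filters. p <= q means p is
    stronger (extends) q. *)
Definition partial_order {P : Type} (le : P -> P -> Prop) : Prop :=
  (forall p, le p p) /\ (forall p q r, le p q -> le q r -> le p r) /\
  (forall p q, le p q -> le q p -> p = q).
Definition centered {P : Type} (le : P -> P -> Prop) (C : P -> Prop) : Prop :=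
  forall l : list P, (forall p, In p l -> C p) -> exists r, forall p, In p l -> le r p.
Definition sigma_centered {P : Type} (le : P -> P -> Prop) : Prop :=
  exists c : P -> nat, forall n, centered le (fun p => c p = n).
Definition dense_in {P : Type} (le : P -> P -> Prop) (D : P -> Prop) : Prop :=
  forall p, exists q, le q p /\ D q.
Definition is_filter {P : Type} (le : P -> P -> Prop) (G : P -> Prop) : Prop :=
  (exists p, G p) /\
  (forall p q, G p -> le p q -> G q) /\
  (forall p q, G p -> G q -> exists r, G r /\ le r p /\ le r q).

Definition MA_sigma_centered : Prop :=
  forall (P : Type) (le : P -> P -> Prop),
    partial_order le -> sigma_centered le ->
    forall (I : Type) (D : I -> P -> Prop),
      card_lt I Cantor -> (forall i, dense_in le (D i)) ->
      exists G, is_filter le G /\ forall i, exists p, G p /\ D i p.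

(** The homeomorphism is the generic object of a σ-centered forcing.  A
    condition is a level n, a permutation s of the binary strings of length n
    (the approximation of the homeomorphism at level n) and finitely many
    entries x ↦ y with s(x|n) = y|n.  Entries are labelled pairs drawn from a
    relation E u v x y which, for fixed labels, is the graph of a partial
    injection; conditions with the same level, permutation and coded entry
    prefixes/labels are compatible, which gives σ-centeredness.

    Finally E is taken to pair points of
    A_α ∩ [u] and B_α ∩ [v] having the same index in fixed enumerations by
    λ_α, which makes the corollary a direct consequence. *)

From Stdlib Require Import List Arith Lia Classical ClassicalEpsilon
  FunctionalExtensionality PropExtensionality ProofIrrelevance.
From Stdlib Require Arith.Cantor.
Import ListNotations.

Lemma choice_dep {A : Type} {B : A -> Type} (R : forall x, B x -> Prop) :
  (forall x, exists y, R x y) -> exists f : forall x, B x, forall x, R x (f x).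
Proof.
  intro H. exists (fun x => proj1_sig (constructive_indefinite_description _ (H x))).
  intro x. exact (proj2_sig (constructive_indefinite_description _ (H x))).
Qed.

Lemma card_le_trans A B C : card_le A B -> card_le B C -> card_le A C.
Proof. intros [f Hf] [g Hg]. exists (fun x => g (f x)). auto. Qed.

Lemma card_lt_of_le X Y : card_le X Y -> card_lt Y Cantor -> card_lt X Cantor.
Proof.
  intros HXY [HY HnY]. split; [eapply card_le_trans; eauto|].
  intro H. apply HnY. eapply card_le_trans; eauto.
Qed.

Definition interleave (x z : Cantor) : Cantor :=
  fun i => if Nat.even i then x (Nat.div2 i) else z (Nat.div2 i).

Lemma interleave_l x z i : interleave x z (2 * i) = x i.
Proof. unfold interleave. rewrite Nat.even_mul, Nat.div2_double. reflexivity. Qed.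

Lemma interleave_r x z i : interleave x z (S (2 * i)) = z i.
Proof.
  unfold interleave. rewrite Nat.even_succ, Nat.odd_mul, Nat.div2_succ_double. reflexivity.
Qed.

Lemma interleave_inj x z x' z' : interleave x z = interleave x' z' -> x = x' /\ z = z'.
Proof.
  intro H. split; apply functional_extensionality; intro i.
  - rewrite <- (interleave_l x z), <- (interleave_l x' z'), H. reflexivity.
  - rewrite <- (interleave_r x z), <- (interleave_r x' z'), H. reflexivity.
Qed.

(** Diagonalization: if 2^ω injects into X + ℕ, pick a point z differing from
    each of the countably many points sent to ℕ; then x ↦ (x interleaved with z)
    never lands in ℕ, so 2^ω injects into X. *)
Lemma cantor_into_sum_nat X : card_le Cantor (X + nat) -> card_le Cantor X.
Proof.
  intros [g Hg].
  destruct (choice_dep (fun n (xn : Cantor) => (exists x, g x = inr n) -> g xn = inr n))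
    as [xs Hxs].
  { intro n. destruct (classic (exists x, g x = inr n)) as [[x Hx]|Hn].
    - exists x. auto.
    - exists (fun _ => true). tauto. }
  set (z := fun n => negb (xs n (S (2 * n)))).
  assert (Hleft : forall x, exists y, g (interleave x z) = inl y).
  { intro x. destruct (g (interleave x z)) as [y|n] eqn:E; [eauto|exfalso].
    assert (Exs : xs n = interleave x z).
    { apply Hg. rewrite E. exact (Hxs n (ex_intro _ _ E)). }
    pose proof (f_equal (fun w => w (S (2 * n))) Exs) as Ebit. cbv beta in Ebit.
    rewrite interleave_r in Ebit. unfold z in Ebit. destruct (xs n (S (2 * n))); discriminate. }
  destruct (choice_dep _ Hleft) as [h Hh].
  exists h. intros x x' E.
  assert (Hi : interleave x z = interleave x' z) by (apply Hg; rewrite Hh, E, Hh; reflexivity).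
  exact (proj1 (interleave_inj _ _ _ _ Hi)).
Qed.

Lemma sum_nat_lt X : card_lt X Cantor -> card_lt (X + nat) Cantor.
Proof.
  intros [[e He] HnX]. split.
  - exists (fun s i => match s, i with
                      | inl y, 0 => true
                      | inl y, S j => e y j
                      | inr n, 0 => false
                      | inr n, S j => Nat.eqb j n
                      end).
    intros [y|n] [y'|n'] E; pose proof (fun i => f_equal (fun w => w i) E) as Ei;
      cbv beta in Ei; try discriminate (Ei 0).
    + f_equal. apply He, functional_extensionality. intro j. exact (Ei (S j)).
    + f_equal. specialize (Ei (S n)). simpl in Ei. rewrite Nat.eqb_refl in Ei.
      symmetry in Ei. apply Nat.eqb_eq in Ei. auto.
  - intro H. apply HnX, cantor_into_sum_nat, H.
Qed.

(** MA for preorders: pass to the partial order of upward closures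
    [upset p = {q | p ≤ q}], ordered by reverse inclusion. *)
Definition upset {P : Type} (le : P -> P -> Prop) (p : P) : P -> Prop := fun q => le p q.

Lemma MA_preorder (MA : MA_sigma_centered) (P : Type) (le : P -> P -> Prop) :
  (forall p, le p p) -> (forall p q r, le p q -> le q r -> le p r) -> sigma_centered le ->
  forall (I : Type) (D : I -> P -> Prop),
    card_lt I Cantor -> (forall i, dense_in le (D i)) ->
    exists G : P -> Prop, (forall p q, G p -> G q -> exists r, G r /\ le r p /\ le r q)
      /\ forall i, exists p, G p /\ D i p.
Proof.
  intros Hrefl Htrans [c Hc] I D HI HD.
  pose (Q := {S : P -> Prop | exists p, S = upset le p}).
  pose (leQ := fun S T : Q => forall r, proj1_sig T r -> proj1_sig S r).
  pose (cls := fun p : P => exist _ (upset le p) (ex_intro _ p eq_refl) : Q).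
  assert (Hcls : forall p q, leQ (cls p) (cls q) <-> le p q).
  { intros p q. split; [intro H; apply H, Hrefl|intros H r Hr; exact (Htrans _ _ _ H Hr)]. }
  assert (Hext : forall S T : Q, proj1_sig S = proj1_sig T -> S = T).
  { intros [S HS] [T HT] E. simpl in E. subst. f_equal. apply proof_irrelevance. }
  destruct (choice_dep (fun (S : Q) p => proj1_sig S = upset le p)) as [rep Hrep].
  { intro S. exact (proj2_sig S). }
  assert (Hrepcls : forall S, S = cls (rep S)) by (intro S; apply Hext, Hrep).
  assert (HPO : partial_order leQ).
  { split; [|split].
    - intros S r. auto.
    - intros S T U H1 H2 r Hr. auto.
    - intros S T H1 H2. apply Hext, functional_extensionality. intro r.
      apply propositional_extensionality. split; auto. }
  assert (HSC : sigma_centered leQ).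
  { exists (fun S => c (rep S)). intros n l Hl.
    destruct (Hc n (map rep l)) as [r Hr].
    { intros p Hp. apply in_map_iff in Hp. destruct Hp as [S [<- HS]]. auto. }
    exists (cls r). intros S HS. rewrite (Hrepcls S). apply Hcls, Hr, in_map, HS. }
  assert (HDQ : forall i, dense_in leQ (fun S => exists p, S = cls p /\ D i p)).
  { intros i S. destruct (HD i (rep S)) as [q [Hq HDq]].
    exists (cls q). split; [rewrite (Hrepcls S); apply Hcls, Hq|eauto]. }
  destruct (MA Q leQ HPO HSC I _ HI HDQ) as [GQ [[_ [_ Hdir]] Hmeet]].
  exists (fun p => GQ (cls p)). split.
  - intros p q Hp Hq. destruct (Hdir _ _ Hp Hq) as [R [HR [HRp HRq]]].
    rewrite (Hrepcls R) in HR, HRp, HRq.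
    exists (rep R). split; [auto|split; apply Hcls; auto].
  - intro i. destruct (Hmeet i) as [S [HS [p [-> Hp]]]]. eauto.
Qed.

Fixpoint code (l : list nat) : nat :=
  match l with [] => 0 | h :: t => S (Cantor.to_nat (h, code t)) end.

Lemma code_inj l l' : code l = code l' -> l = l'.
Proof.
  revert l'; induction l as [|h t IH]; intros [|h' t'] H; cbn [code] in H;
    try discriminate; auto.
  apply Nat.succ_inj, (f_equal Cantor.of_nat) in H. rewrite !Cantor.cancel_of_to in H.
  injection H as -> H. f_equal. auto.
Qed.

Lemma le_list_max (l : list nat) x : In x l -> x <= list_max l.
Proof.
  intro Hx. assert (H : Forall (fun k => k <= list_max l) l) by (apply list_max_le; lia).
  rewrite Forall_forall in H. auto.
Qed.

Definition prefix (s t : list nat) : Prop := exists r, t = s ++ r.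

Lemma prefix_nth s t i : prefix s t -> i < length s -> nth i t 0 = nth i s 0.
Proof. intros [r ->] H. apply app_nth1, H. Qed.

Lemma prefix_len s t : prefix s t -> length s <= length t.
Proof. intros [r ->]. rewrite length_app. lia. Qed.

Lemma prefix_refl s : prefix s s.
Proof. exists []. rewrite app_nil_r. reflexivity. Qed.

Lemma prefix_trans s t u : prefix s t -> prefix t u -> prefix s u.
Proof. intros [r ->] [r' ->]. exists (r ++ r'). symmetry. apply app_assoc. Qed.

(** Hechler forcing for a family [h : I -> ℕ -> ℕ]: a condition is a finite
    stem with a finite list of promised indices; a stronger condition may only
    append stem values dominating every promised function. *)
Section Dominating.
Variables (I : Type) (h : I -> nat -> nat).

Definition dcond : Type := (list nat * list I)%type.

Definition dle (q p : dcond) : Prop :=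
  prefix (fst p) (fst q) /\ incl (snd p) (snd q) /\
  forall i, length (fst p) <= i < length (fst q) ->
    forall w, In w (snd p) -> h w i <= nth i (fst q) 0.

Lemma dle_refl p : dle p p.
Proof. split; [apply prefix_refl|split; [apply incl_refl|]]. intros; lia. Qed.

Lemma dle_trans p q r : dle p q -> dle q r -> dle p r.
Proof.
  intros [Hpq1 [Hpq2 Hpq3]] [Hqr1 [Hqr2 Hqr3]].
  split; [eapply prefix_trans; eauto|split; [eapply incl_tran; eauto|]].
  intros i Hi w Hw. destruct (le_lt_dec (length (fst q)) i).
  - apply Hpq3; auto. lia.
  - rewrite (prefix_nth _ _ _ Hpq1 l). apply Hqr3; auto. lia.
Qed.

(** Conditions with the same stem are compatible: join their promises. *)
Lemma dle_sigma_centered : sigma_centered dle.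
Proof.
  exists (fun p => code (fst p)). intros n [|p0 l] Hl.
  - exists ([], []). intros p [].
  - exists (fst p0, flat_map snd (p0 :: l)). intros p Hp.
    assert (E : fst p = fst p0)
      by (apply code_inj; rewrite (Hl p Hp), (Hl p0 (or_introl eq_refl)); reflexivity).
    split; [rewrite E; apply prefix_refl|split].
    + intros w Hw. apply in_flat_map. eauto.
    + simpl. rewrite E. lia.
Qed.

(** A stem can always be lengthened by one, using the maximum of the promises. *)
Lemma dle_step p : exists q, dle q p /\ length (fst q) = S (length (fst p)).
Proof.
  set (v := list_max (map (fun w => h w (length (fst p))) (snd p))).
  exists (fst p ++ [v], snd p). split; [split; [exists [v]; auto|split; [apply incl_refl|]]|].
  - simpl. intros i Hi w Hw. rewrite length_app in Hi; simpl in Hi.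
    replace i with (length (fst p)) by lia. rewrite app_nth2, Nat.sub_diag by lia.
    apply le_list_max, in_map_iff. eauto.
  - simpl. rewrite length_app. simpl. lia.
Qed.

Lemma dle_lengthen k p : exists q, dle q p /\ k <= length (fst q).
Proof.
  induction k as [|k [q [Hq Hk]]].
  - exists p. split; [apply dle_refl|lia].
  - destruct (dle_step q) as [q' [Hq' Hlen]]. exists q'. split; [eapply dle_trans; eauto|lia].
Qed.

Lemma MA_dominating (MA : MA_sigma_centered) :
  card_lt I Cantor -> exists d : nat -> nat, forall w, exists N, forall i, N <= i -> h w i <= d i.
Proof.
  intro HI.
  pose (D := fun (j : I + nat) (p : dcond) =>
    match j with inl w => In w (snd p) | inr n => n <= length (fst p) end).
  destruct (MA_preorder MA _ dle dle_refl dle_trans dle_sigma_centered _ D (sum_nat_lt _ HI))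
    as [G [Hdir Hmeet]].
  { intros [w|n] p.
    - exists (fst p, w :: snd p). split; [|simpl; auto].
      split; [apply prefix_refl|split; [intros z Hz; simpl; auto|simpl; intros; lia]].
    - destruct (dle_lengthen n p) as [q Hq]. exists q. exact Hq. }
  destruct (choice_dep (fun i p => G p /\ S i <= length (fst p))) as [pk Hpk].
  { intro i. exact (Hmeet (inr (S i))). }
  exists (fun i => nth i (fst (pk i)) 0). intro w.
  destruct (Hmeet (inl w)) as [p0 [Hp0 Hin]]. simpl in Hin.
  exists (length (fst p0)). intros i Hi. destruct (Hpk i) as [Hpki Hlen].
  destruct (Hdir _ _ Hp0 Hpki) as [r [Hr [[_ [_ Hrp0]] [Hrpk _]]]].
  rewrite <- (prefix_nth _ _ _ Hrpk) by lia.
  apply Hrp0; auto. apply prefix_len in Hrpk. lia.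
Qed.

End Dominating.

Definition enc (w : nat -> nat) : Cantor :=
  fun m => let (n, k) := Cantor.of_nat m in Nat.eqb (w n) k.

Lemma enc_inj w w' : enc w = enc w' -> w = w'.
Proof.
  intro H. apply functional_extensionality; intro n.
  pose proof (f_equal (fun f => f (Cantor.to_nat (n, w n))) H) as E. cbv beta in E.
  unfold enc in E. rewrite Cantor.cancel_of_to, Nat.eqb_refl in E.
  symmetry in E. apply Nat.eqb_eq in E. auto.
Qed.

Lemma fiber_card_le {Y K : Type} {T : K -> Type} (g : Y -> {a : K & T a}) :
  (forall y y', g y = g y' -> y = y') -> forall a, card_le {y | projT1 (g y) = a} (T a).
Proof.
  intros Hg a.
  destruct (choice_dep (fun (y : {y | projT1 (g y) = a}) t => g (proj1_sig y) = existT T a t))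
    as [tf Htf].
  { intros [y Hy]. simpl. destruct (g y) as [a' t]. simpl in Hy. subst. eauto. }
  exists tf. intros y y' E.
  assert (Ey : proj1_sig y = proj1_sig y') by (apply Hg; rewrite Htf, Htf, E; reflexivity).
  destruct y, y'. simpl in Ey. subst. f_equal. apply proof_irrelevance.
Qed.

(** If 2^ω injected
    into [{a & T a}], each fibre of ℕ^ℕ would be dominated by some [d a], and a
    function dominating all the [d a] could lie in no fibre. *)
Lemma MA_sigma_lt (MA : MA_sigma_centered) (K : Type) (T : K -> Type) :
  card_lt K Cantor -> (forall a, card_lt (T a) Cantor) -> card_lt {a : K & T a} Cantor.
Proof.
  intros [[ek Hek] HnK] HT. split.
  - destruct (choice_dep (fun a (e : T a -> Cantor) => forall x y, e x = e y -> x = y))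
      as [e He].
    { intro a. exact (proj1 (HT a)). }
    exists (fun s => interleave (ek (projT1 s)) (e (projT1 s) (projT2 s))).
    intros [a t] [a' t'] H. simpl in H. apply interleave_inj in H. destruct H as [H1 H2].
    apply Hek in H1. subst a'. apply He in H2. subst. reflexivity.
  - intros [g Hg].
    set (gw := fun w => g (enc w)).
    assert (Hgw : forall w w', gw w = gw w' -> w = w') by (intros; apply enc_inj, Hg; auto).
    destruct (choice_dep (fun a (d : nat -> nat) =>
        forall w : {w | projT1 (gw w) = a}, exists N, forall i, N <= i -> S (proj1_sig w i) <= d i))
      as [d Hd].
    { intro a. apply (MA_dominating _ (fun w i => S (proj1_sig w i)) MA).
      apply (card_lt_of_le _ (T a)); [apply fiber_card_le, Hgw|apply HT]. }
    destruct (MA_dominating K d MA (conj (ex_intro _ ek Hek) HnK)) as [w0 Hw0].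
    destruct (Hd _ (exist _ w0 eq_refl)) as [N1 HN1]. destruct (Hw0 (projT1 (gw w0))) as [N2 HN2].
    specialize (HN1 (N1 + N2)). specialize (HN2 (N1 + N2)). simpl in HN1. lia.
Qed.

Lemma bool_lt : card_lt bool Cantor.
Proof.
  split.
  - exists (fun b _ => b). intros x y H. exact (f_equal (fun f => f 0) H).
  - intros [g Hg].
    set (x1 := fun _ : nat => true). set (x2 := fun _ : nat => false).
    set (x3 := fun i => Nat.eqb i 0).
    assert (N12 : x1 <> x2) by (intro H; discriminate (f_equal (fun f => f 0) H)).
    assert (N13 : x1 <> x3) by (intro H; discriminate (f_equal (fun f => f 1) H)).
    assert (N23 : x2 <> x3) by (intro H; discriminate (f_equal (fun f => f 0) H)).
    destruct (g x1) eqn:E1, (g x2) eqn:E2, (g x3) eqn:E3;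
      first [apply N12, Hg; congruence|apply N13, Hg; congruence|apply N23, Hg; congruence].
Qed.

(** A binary union of sets smaller than 𝔠, as a Σ-type over [bool]. *)
Lemma sum_lt (MA : MA_sigma_centered) X Y :
  card_lt X Cantor -> card_lt Y Cantor -> card_lt (X + Y) Cantor.
Proof.
  intros HX HY. apply (card_lt_of_le _ {b : bool & if b then X else Y}).
  - exists (fun s => match s with
                    | inl x => existT (fun b : bool => if b then X else Y) true x
                    | inr y => existT (fun b : bool => if b then X else Y) false y end).
    intros [x|y] [x'|y'] H; try discriminate;
      apply Eqdep_dec.inj_pair2_eq_dec in H; try apply Bool.bool_dec; subst; auto.
  - apply MA_sigma_lt; [exact MA|apply bool_lt|intros []; auto].
Qed.

Definition pre (n : nat) (x : Cantor) : list bool := map x (seq 0 n).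

Lemma length_pre n x : length (pre n x) = n.
Proof. unfold pre. rewrite length_map, length_seq. reflexivity. Qed.

Lemma nth_pre n x i : i < n -> nth i (pre n x) false = x i.
Proof.
  intro H. unfold pre.
  rewrite nth_indep with (d' := x 0) by (rewrite length_map, length_seq; auto).
  rewrite map_nth, seq_nth; auto.
Qed.

Lemma firstn_pre m n x : m <= n -> firstn m (pre n x) = pre m x.
Proof.
  intro H. apply nth_ext with (d := false) (d' := false).
  - rewrite length_firstn, !length_pre. lia.
  - intros i Hi. rewrite length_firstn, length_pre in Hi.
    rewrite nth_firstn, !nth_pre by lia.
    replace (i <? m) with true by (symmetry; apply Nat.ltb_lt; lia). reflexivity.
Qed.

Lemma pre_agree n x y : pre n x = pre n y -> agree n x y.
Proof. intros H i Hi. rewrite <- (nth_pre n x i Hi), <- (nth_pre n y i Hi), H. reflexivity. Qed.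

Lemma agree_pre n x y : agree n x y -> pre n x = pre n y.
Proof.
  intro H. apply nth_ext with (d := false) (d' := false); rewrite ?length_pre; auto.
  intros i Hi. rewrite !nth_pre by auto. apply H, Hi.
Qed.

Lemma pre_ext x y : (forall n, pre n x = pre n y) -> x = y.
Proof.
  intro H. apply functional_extensionality. intro i. apply (pre_agree (S i)); auto.
Qed.

Definition cone (u : list bool) (x : Cantor) : Prop := pre (length u) x = u.

Lemma cone_open u : is_open (cone u).
Proof.
  intros x Hx. exists (length u). intros y Hy. unfold cone in *.
  rewrite <- (agree_pre _ _ _ Hy). exact Hx.
Qed.

Lemma cone_nonempty u : exists x, cone u x.
Proof.
  exists (fun i => nth i u false). unfold cone.
  apply nth_ext with (d := false) (d' := false); rewrite ?length_pre; auto.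
  intros i Hi. rewrite nth_pre; auto.
Qed.

Lemma cone_pre w n y : length w = n -> cone w y -> pre n y = w.
Proof. intros <- H. exact H. Qed.

Definition sep (m : nat) (L : list Cantor) : Prop :=
  forall x1 x2, In x1 L -> In x2 L -> pre m x1 = pre m x2 -> x1 = x2.

Lemma sep_mono m m' L : sep m L -> m <= m' -> sep m' L.
Proof.
  intros H Hm x1 x2 H1 H2 E. apply H; auto.
  rewrite <- (firstn_pre m m' x1), <- (firstn_pre m m' x2), E by auto. reflexivity.
Qed.

Lemma sep_sub m L L' : sep m L' -> incl L L' -> sep m L.
Proof. intros H Hi x1 x2 H1 H2. apply H; auto. Qed.

Lemma sep_cons m x L : sep m L -> (forall z, In z L -> pre m x <> pre m z) -> sep m (x :: L).
Proof.
  intros HL Hx x1 x2 [<-|H1] [<-|H2] Q; auto.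
  - destruct (Hx x2 H2 Q).
  - destruct (Hx x1 H1 (eq_sym Q)).
Qed.

Lemma common_bound {X : Type} (P : nat -> X -> Prop)
  (Hmono : forall k k' z, k <= k' -> P k z -> P k' z) (L : list X) :
  (forall z, In z L -> exists k, P k z) -> exists k, forall z, In z L -> P k z.
Proof.
  induction L as [|z L IH]; intro H.
  - exists 0. intros _ [].
  - destruct IH as [k Hk]; [intros; apply H; simpl; auto|].
    destruct (H z (or_introl eq_refl)) as [k' Hk'].
    exists (k + k'). intros z' [<-|Hz']; [apply (Hmono k')|apply (Hmono k)]; auto; lia.
Qed.

Lemma sep_exists L : exists m, sep m L.
Proof.
  destruct (common_bound
      (fun k (xy : Cantor * Cantor) => pre k (fst xy) = pre k (snd xy) -> fst xy = snd xy))
    with (L := list_prod L L) as [m Hm].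
  - intros k k' [x y] Hk Hxy E. apply Hxy. simpl in *.
    rewrite <- (firstn_pre k k' x), <- (firstn_pre k k' y), E by auto. reflexivity.
  - intros [x y] _. destruct (classic (x = y)) as [E|Hne]; [exists 0; auto|].
    destruct (classic (exists k, pre k x <> pre k y)) as [[k Hk]|Hall].
    + exists k. simpl. intro E. contradiction.
    + exfalso. apply Hne, pre_ext. intro n. apply NNPP. eauto.
  - exists m. intros x1 x2 H1 H2. apply (Hm (x1, x2)), in_prod; auto.
Qed.

Definition level_bij (n : nat) (s t : list bool -> list bool) : Prop :=
  forall u, length u = n ->
    length (s u) = n /\ length (t u) = n /\ t (s u) = u /\ s (t u) = u.

Definition refines (n n' : nat) (s s' : list bool -> list bool) : Prop :=
  forall u, length u = n' -> firstn n (s' u) = s (firstn n u).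

Lemma level_bij_inj n s t u u' :
  level_bij n s t -> length u = n -> length u' = n -> s u = s u' -> u = u'.
Proof.
  intros Hb H1 H2 E. destruct (Hb u H1) as [_ [_ [A _]]]. destruct (Hb u' H2) as [_ [_ [B _]]].
  rewrite <- A, <- B, E. reflexivity.
Qed.

Lemma firstn_len_app (a b : list bool) n : length a = n -> firstn n (a ++ b) = a.
Proof. intros <-. rewrite firstn_app, Nat.sub_diag, firstn_all, app_nil_r. reflexivity. Qed.

Lemma skipn_len_app (a b : list bool) n : length a = n -> skipn n (a ++ b) = b.
Proof. intros <-. rewrite skipn_app, skipn_all, Nat.sub_diag. reflexivity. Qed.

Lemma level_bij_extend n n' s t : n <= n' -> level_bij n s t ->
  exists s' t', level_bij n' s' t' /\ refines n n' s s'.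
Proof.
  intros Hn Hb.
  exists (fun u => s (firstn n u) ++ skipn n u), (fun u => t (firstn n u) ++ skipn n u).
  split.
  - intros u Hu. assert (Hf : length (firstn n u) = n) by (rewrite length_firstn; lia).
    destruct (Hb _ Hf) as [A1 [A2 [A3 A4]]].
    rewrite !length_app, A1, A2, length_skipn, !firstn_len_app, !skipn_len_app by auto.
    rewrite A3, A4, firstn_skipn. repeat split; lia.
  - intros u Hu. apply firstn_len_app, Hb. rewrite length_firstn. lia.
Qed.

Definition lbeq (a b : list bool) : {a = b} + {a <> b} := list_eq_dec Bool.bool_dec a b.

Definition swap (w v z : list bool) : list bool :=
  if lbeq z w then v else if lbeq z v then w else z.

Lemma swap_hit w v : swap w v w = v.
Proof. unfold swap. destruct (lbeq w w); congruence. Qed.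

Lemma swap_miss w v z : z <> w -> z <> v -> swap w v z = z.
Proof.
  intros H1 H2. unfold swap. destruct (lbeq z w); [congruence|]. destruct (lbeq z v); congruence.
Qed.

Lemma swap_invol w v z : swap w v (swap w v z) = z.
Proof.
  unfold swap. destruct (lbeq z w) as [->|H1].
  - destruct (lbeq v w) as [->|H2]; auto. destruct (lbeq v v); congruence.
  - destruct (lbeq z v) as [->|H2].
    + destruct (lbeq w w); congruence.
    + destruct (lbeq z w); [congruence|]. destruct (lbeq z v); congruence.
Qed.

Lemma level_bij_swap n n' s s' t' w v :
  level_bij n' s' t' -> refines n n' s s' -> length w = n' -> length v = n' ->
  firstn n w = firstn n v ->
  level_bij n' (fun z => swap w v (s' z)) (fun z => t' (swap w v z)) /\
  refines n n' s (fun z => swap w v (s' z)).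
Proof.
  intros Hb Hr Hw Hv Hwv.
  assert (Hlen : forall z, length z = n' -> length (swap w v z) = n').
  { intros z Hz. unfold swap. destruct (lbeq z w); destruct (lbeq z v); auto. }
  assert (Hpre : forall z, firstn n (swap w v z) = firstn n z).
  { intro z. unfold swap. destruct (lbeq z w); destruct (lbeq z v); subst; auto. }
  split.
  - intros u Hu. destruct (Hb u Hu) as [A1 [A2 [A3 A4]]].
    destruct (Hb _ (Hlen u Hu)) as [B1 [B2 [B3 B4]]].
    rewrite swap_invol, A3, B4, swap_invol. repeat split; auto.
  - intros u Hu. rewrite Hpre. apply Hr, Hu.
Qed.

(** Entries of a condition: a pair of points [x ↦ y] to be matched, labelled by
    two strings [u], [v] (used to make the forcing σ-centered). *)
Record ent := mkE { ex : Cantor; ey : Cantor; eu : list bool; ev : list bool }.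

Definition matched (n : nat) (s : list bool -> list bool) (F : list ent) : Prop :=
  forall e, In e F -> s (pre n (ex e)) = pre n (ey e).

Definition consistent (F : list ent) : Prop :=
  forall e1 e2, In e1 F -> In e2 F -> (ex e1 = ex e2 <-> ey e1 = ey e2).

(** Re-matching: once the sources and the targets of a consistent list of
    entries are separated at level [n'], a level-[n] bijection matching them
    refines to a level-[n'] bijection matching them, one transposition per entry. *)
Section Rematch.
Variables (n n' : nat) (s : list bool -> list bool) (F : list ent).
Hypotheses (Hn : n <= n') (HmF : matched n s F) (HcF : consistent F)
  (HsepX : sep n' (map ex F)) (HsepY : sep n' (map ey F)).

Lemma rematch_step s' t' e Fp :
  level_bij n' s' t' -> refines n n' s s' -> In e F -> incl Fp F -> matched n' s' Fp ->
  exists s'' t'', level_bij n' s'' t'' /\ refines n n' s s'' /\ matched n' s'' (e :: Fp).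
Proof.
  intros Hb Hr He HFp Hm.
  set (w := s' (pre n' (ex e))). set (v := pre n' (ey e)).
  assert (Hw : length w = n') by apply (Hb _ (length_pre _ _)).
  assert (Hwv : firstn n w = firstn n v).
  { unfold w, v. rewrite Hr, !firstn_pre by (auto using length_pre). apply HmF, He. }
  destruct (level_bij_swap n n' s s' t' w v Hb Hr Hw (length_pre _ _) Hwv) as [Hb' Hr'].
  exists (fun z => swap w v (s' z)), (fun z => t' (swap w v z)).
  split; [exact Hb'|split; [exact Hr'|]].
  intros e0 [<-|He0]; [apply swap_hit|]. rewrite (Hm e0 He0).
  assert (He0F : In e0 F) by auto.
  (* a target hit by the transposition must belong to the entry [e] itself *)
  assert (Hsame : pre n' (ey e0) = w \/ pre n' (ey e0) = v -> ey e0 = ey e).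
  { intros [E|E].
    - apply (HcF _ _ He0F He), HsepX; try apply in_map; auto.
      apply (level_bij_inj n' s' t'); auto using length_pre. rewrite Hm; auto.
    - apply HsepY; try apply in_map; auto. }
  destruct (classic (pre n' (ey e0) = w \/ pre n' (ey e0) = v)) as [Hhit|Hmiss].
  - assert (Ey := Hsame Hhit). assert (Ex : ex e0 = ex e) by (apply (HcF _ _ He0F He), Ey).
    assert (Ewv : w = v) by (unfold w, v; rewrite <- Ex, <- Ey; apply Hm, He0).
    rewrite Ey. fold v. rewrite Ewv. apply swap_hit.
  - apply swap_miss; intro; apply Hmiss; auto.
Qed.

Lemma rematch t : level_bij n s t ->
  exists s' t', level_bij n' s' t' /\ refines n n' s s' /\ matched n' s' F.
Proof.
  intro Hb. destruct (level_bij_extend n n' s t Hn Hb) as [s1 [t1 [Hb1 Hr1]]].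
  assert (Hall : forall Fp, incl Fp F ->
           exists s' t', level_bij n' s' t' /\ refines n n' s s' /\ matched n' s' Fp).
  { induction Fp as [|e Fp IH]; intro Hi.
    - exists s1, t1. split; [exact Hb1|split; [exact Hr1|intros _ []]].
    - destruct IH as [s' [t' [Hb' [Hr' Hm']]]]; [intros z Hz; apply Hi; simpl; auto|].
      apply (rematch_step s' t'); auto;
        [apply Hi; simpl; auto|intros z Hz; apply Hi; simpl; auto]. }
  apply Hall, incl_refl.
Qed.

End Rematch.

Lemma raise n s t (F : list ent) (ZX ZY : list Cantor) (N : nat) :
  level_bij n s t -> matched n s F -> consistent F ->
  exists n' s' t', n <= n' /\ N <= n' /\ level_bij n' s' t' /\ refines n n' s s' /\
    matched n' s' F /\ sep n' (map ex F ++ ZX) /\ sep n' (map ey F ++ ZY).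
Proof.
  intros Hb Hm Hc.
  destruct (sep_exists (map ex F ++ ZX)) as [m1 Hm1].
  destruct (sep_exists (map ey F ++ ZY)) as [m2 Hm2].
  set (n' := n + N + m1 + m2).
  assert (HsX : sep n' (map ex F ++ ZX)) by (apply (sep_mono m1); auto; unfold n'; lia).
  assert (HsY : sep n' (map ey F ++ ZY)) by (apply (sep_mono m2); auto; unfold n'; lia).
  destruct (rematch n n' s F) with (t := t) as [s' [t' [Hb' [Hr' Hm']]]]; auto.
  - unfold n'. lia.
  - apply (sep_sub _ _ _ HsX), incl_appl, incl_refl.
  - apply (sep_sub _ _ _ HsY), incl_appl, incl_refl.
  - exists n', s', t'. assert (n <= n' /\ N <= n') as [] by (unfold n'; lia).
    auto 10.
Qed.

Lemma refines_trans n m k s s' s'' : n <= m -> m <= k ->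
  refines n m s s' -> refines m k s' s'' -> refines n k s s''.
Proof.
  intros Hnm Hmk H1 H2 u Hu.
  replace (firstn n (s'' u)) with (firstn n (firstn m (s'' u)))
    by (rewrite firstn_firstn; f_equal; lia).
  rewrite H2, H1 by (auto; rewrite length_firstn; lia).
  rewrite firstn_firstn. f_equal. f_equal. lia.
Qed.

Record cond := mkC { lv : nat; sg : list bool -> list bool; tg : list bool -> list bool;
                     es : list ent }.

Definition cle (q p : cond) : Prop :=
  lv p <= lv q /\ refines (lv p) (lv q) (sg p) (sg q) /\ incl (es p) (es q).

Lemma cle_trans p q r : cle p q -> cle q r -> cle p r.
Proof.
  intros [H1 [H2 H3]] [H4 [H5 H6]].
  split; [lia|split; [eapply refines_trans; eauto|eapply incl_tran; eauto]].
Qed.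

Definition Rel : Type := list bool -> list bool -> Cantor -> Cantor -> Prop.

Section Conditions.
Variable E : Rel.

Record valid (p : cond) : Prop := {
  valid_bij : level_bij (lv p) (sg p) (tg p);
  valid_rel : forall e, In e (es p) -> E (eu e) (ev e) (ex e) (ey e);
  valid_match : matched (lv p) (sg p) (es p);
  valid_sepx : sep (lv p) (map ex (es p));
  valid_sepy : sep (lv p) (map ey (es p)) }.

Lemma cle_refl p : valid p -> cle p p.
Proof.
  intro Vp. split; [lia|split; [|apply incl_refl]].
  intros u Hu. rewrite !firstn_all2; auto; try lia.
  destruct (valid_bij p Vp u Hu) as [H _]. lia.
Qed.

(** Separated and matched entries form a partial injection. *)
Lemma valid_consistent p : valid p -> consistent (es p).
Proof.
  intros Vp e1 e2 H1 H2. pose proof (valid_bij p Vp) as Hb. split; intro Q.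
  - apply (valid_sepy p Vp); try apply in_map; auto.
    rewrite <- !(valid_match p Vp) by auto. rewrite Q. reflexivity.
  - apply (valid_sepx p Vp); try apply in_map; auto.
    apply (level_bij_inj (lv p) (sg p) (tg p)); auto using length_pre.
    rewrite !(valid_match p Vp) by auto. rewrite Q. reflexivity.
Qed.

Lemma valid_raise p N ZX ZY : valid p ->
  exists q, valid q /\ cle q p /\ es q = es p /\ N <= lv q /\
    sep (lv q) (map ex (es p) ++ ZX) /\ sep (lv q) (map ey (es p) ++ ZY).
Proof.
  intro Vp.
  destruct (raise (lv p) (sg p) (tg p) (es p) ZX ZY N (valid_bij p Vp) (valid_match p Vp)
              (valid_consistent p Vp)) as [n' [s' [t' [Hn [HN [Hb [Hr [Hm [HsX HsY]]]]]]]]].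
  exists (mkC n' s' t' (es p)). simpl. split; [|split; [|auto]].
  - split; simpl; auto; [exact (valid_rel p Vp)|..].
    + apply (sep_sub _ _ _ HsX), incl_appl, incl_refl.
    + apply (sep_sub _ _ _ HsY), incl_appl, incl_refl.
  - split; [auto|split; [auto|apply incl_refl]].
Qed.

Lemma valid_add p e : valid p -> E (eu e) (ev e) (ex e) (ey e) ->
  sg p (pre (lv p) (ex e)) = pre (lv p) (ey e) ->
  (forall e0, In e0 (es p) -> pre (lv p) (ex e) <> pre (lv p) (ex e0)) ->
  valid (mkC (lv p) (sg p) (tg p) (e :: es p)) /\ cle (mkC (lv p) (sg p) (tg p) (e :: es p)) p.
Proof.
  intros Vp He Hme Hfresh. pose proof (valid_bij p Vp) as Hb.
  assert (Hfresh_y : forall e0, In e0 (es p) -> pre (lv p) (ey e) <> pre (lv p) (ey e0)).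
  { intros e0 H0 Q. apply (Hfresh e0 H0).
    apply (level_bij_inj (lv p) (sg p) (tg p)); auto using length_pre.
    rewrite Hme, (valid_match p Vp) by auto. exact Q. }
  split; [split; simpl|split; simpl; [lia|split]].
  - exact Hb.
  - intros e0 [<-|H0]; [exact He|apply (valid_rel p Vp), H0].
  - intros e0 [<-|H0]; [exact Hme|apply (valid_match p Vp), H0].
  - apply sep_cons; [exact (valid_sepx p Vp)|].
    intros z Hz. apply in_map_iff in Hz. destruct Hz as [e0 [<- H0]]. exact (Hfresh e0 H0).
  - apply sep_cons; [exact (valid_sepy p Vp)|].
    intros z Hz. apply in_map_iff in Hz. destruct Hz as [e0 [<- H0]]. exact (Hfresh_y e0 H0).
  - apply (cle_refl p Vp).
  - intros e0 H0. simpl. auto.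
Qed.
End Conditions.

Section Density.
Variables (E : Rel) (SA SB : Cantor -> Prop).
Hypothesis RA : forall x, SA x -> forall w, exists y u v, E u v x y /\ cone w y.
Hypothesis RB : forall y, SB y -> forall w, exists x u v, E u v x y /\ cone w x.

(** A point of [SA] becomes a source: raise the level to separate it, then
    pair it with a point in the cone of its image. *)
Lemma dense_source p x : SA x -> valid E p ->
  exists q, valid E q /\ cle q p /\ exists e, In e (es q) /\ ex e = x.
Proof.
  intros Hx Vp. destruct (classic (exists e, In e (es p) /\ ex e = x)) as [Hin|Hnew].
  { exists p. split; [exact Vp|split; [apply (cle_refl E p Vp)|exact Hin]]. }
  destruct (valid_raise E p 0 [x] [] Vp) as [q [Vq [Hqp [Hes [_ [HsX _]]]]]].
  rewrite <- Hes in HsX, Hnew. pose proof (valid_bij E q Vq) as Hb.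
  destruct (RA x Hx (sg q (pre (lv q) x))) as [y [u [v [Exy Hy]]]].
  apply (cone_pre _ (lv q)) in Hy; [|apply Hb, length_pre].
  destruct (valid_add E q (mkE x y u v) Vq Exy (eq_sym Hy)) as [Vr Hrq].
  { simpl. intros e0 H0 Q. apply Hnew. exists e0. split; [exact H0|].
    symmetry. apply HsX; auto using in_or_app, in_map, in_eq. }
  eexists. split; [exact Vr|split; [eapply cle_trans; eauto|]].
  exists (mkE x y u v). simpl. auto.
Qed.

(** Dually, a point of [SB] becomes a target, paired with a point in the cone
    of its preimage. *)
Lemma dense_target p y : SB y -> valid E p ->
  exists q, valid E q /\ cle q p /\ exists e, In e (es q) /\ ey e = y.
Proof.
  intros Hy Vp. destruct (classic (exists e, In e (es p) /\ ey e = y)) as [Hin|Hnew].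
  { exists p. split; [exact Vp|split; [apply (cle_refl E p Vp)|exact Hin]]. }
  destruct (valid_raise E p 0 [] [y] Vp) as [q [Vq [Hqp [Hes [_ [_ HsY]]]]]].
  rewrite <- Hes in HsY, Hnew. pose proof (valid_bij E q Vq) as Hb.
  destruct (RB y Hy (tg q (pre (lv q) y))) as [x [u [v [Exy Hx]]]].
  apply (cone_pre _ (lv q)) in Hx; [|apply Hb, length_pre].
  assert (Hmx : sg q (pre (lv q) x) = pre (lv q) y) by (rewrite Hx; apply Hb, length_pre).
  destruct (valid_add E q (mkE x y u v) Vq Exy Hmx) as [Vr Hrq].
  { simpl. intros e0 H0 Q. apply Hnew. exists e0. split; [exact H0|].
    symmetry. apply HsY; auto using in_or_app, in_map, in_eq.
    rewrite <- Hmx, Q. apply (valid_match E q Vq), H0. }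
  eexists. split; [exact Vr|split; [eapply cle_trans; eauto|]].
  exists (mkE x y u v). simpl. auto.
Qed.

End Density.

Lemma dense_level E p N : valid E p -> exists q, valid E q /\ cle q p /\ N <= lv q.
Proof.
  intro Vp. destruct (valid_raise E p N [] [] Vp) as [q [Vq [Hqp [_ [HN _]]]]]. eauto.
Qed.

Lemma map_inj {A B : Type} (f : A -> B) (Hf : forall x y, f x = f y -> x = y) l l' :
  map f l = map f l' -> l = l'.
Proof.
  revert l'; induction l; intros [|b l'] H; simpl in H; try discriminate; auto.
  injection H as H1 H2. f_equal; auto.
Qed.

Definition lbcode (u : list bool) : nat := code (map Nat.b2n u).

Lemma lbcode_inj u u' : lbcode u = lbcode u' -> u = u'.
Proof.
  intro H. apply code_inj, map_inj in H; auto. intros [] []; simpl; congruence.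
Qed.

Fixpoint all_str (n : nat) : list (list bool) :=
  match n with 0 => [[]] | S n => flat_map (fun u => [false :: u; true :: u]) (all_str n) end.

Lemma all_str_in n u : length u = n -> In u (all_str n).
Proof.
  revert u; induction n; intros [|b u] H; simpl in *; try discriminate; auto.
  apply in_flat_map. exists u. split; [apply IHn; lia|]. destruct b; simpl; auto.
Qed.

Definition entry_code (n : nat) (e : ent) : nat :=
  code [lbcode (pre n (ex e)); lbcode (pre n (ey e)); lbcode (eu e); lbcode (ev e)].

Lemma entry_code_inj n e e' : entry_code n e = entry_code n e' ->
  pre n (ex e) = pre n (ex e') /\ pre n (ey e) = pre n (ey e') /\ eu e = eu e' /\ ev e = ev e'.
Proof.
  intro H. apply code_inj in H. injection H as H1 H2 H3 H4.
  apply lbcode_inj in H1, H2, H3, H4. auto.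
Qed.

(** Countable colouring of conditions, for σ-centeredness: the level, the
    bijection at that level, and the prefixes and labels of the entries. *)
Definition color (p : cond) : nat :=
  code [lv p; code (map (fun u => lbcode (sg p u)) (all_str (lv p)));
        code (map (entry_code (lv p)) (es p))].

Lemma color_eq p q : color p = color q ->
  lv p = lv q /\ (forall u, length u = lv p -> sg p u = sg q u) /\
  map (entry_code (lv p)) (es p) = map (entry_code (lv p)) (es q).
Proof.
  intro H. apply code_inj in H. injection H as H1 H2 H3.
  rewrite <- H1 in H2, H3. apply code_inj in H2, H3. split; [exact H1|split; [|exact H3]].
  intros u Hu. apply lbcode_inj. rewrite map_ext_in_iff in H2. apply H2, all_str_in, Hu.
Qed.

Lemma twin_of_map {A B : Type} (f : A -> B) l l' a' :
  map f l = map f l' -> In a' l' -> exists a, In a l /\ f a = f a'.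
Proof.
  revert l'; induction l as [|a l IH]; intros [|b l'] H Ha'; simpl in *;
    try discriminate; try tauto.
  injection H as H1 H2. destruct Ha' as [<-|Ha']; [eauto|].
  destruct (IH l' H2 Ha') as [a0 [? ?]]. eauto.
Qed.

Section Amalgamation.
Variable E : Rel.
Hypothesis E_fun : forall u v x y1 y2, E u v x y1 -> E u v x y2 -> y1 = y2.
Hypothesis E_inj : forall u v x1 x2 y, E u v x1 y -> E u v x2 y -> x1 = x2.

Lemma align p Fq : valid E p -> (forall e, In e Fq -> E (eu e) (ev e) (ex e) (ey e)) ->
  map (entry_code (lv p)) (es p) = map (entry_code (lv p)) Fq ->
  forall e1 e2, In e1 (es p) -> In e2 Fq -> (ex e1 = ex e2 <-> ey e1 = ey e2).
Proof.
  intros Vp HFq Hm e1 e2 H1 H2.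
  destruct (twin_of_map _ _ _ _ Hm H2) as [e1' [H1' Hc]].
  apply entry_code_inj in Hc. destruct Hc as [Cx [Cy [Cu Cv]]].
  assert (Rel1 := valid_rel E p Vp e1' H1'). rewrite Cu, Cv in Rel1.
  assert (Hcons := valid_consistent E p Vp e1' e1 H1' H1).
  split; intro Q.
  - assert (X1 : ex e1' = ex e1)
      by (apply (valid_sepx E p Vp); auto using in_map; rewrite Cx, Q; auto).
    rewrite <- (proj1 Hcons X1). rewrite X1, Q in Rel1. eapply E_fun; eauto.
  - assert (Y1 : ey e1' = ey e1)
      by (apply (valid_sepy E p Vp); auto using in_map; rewrite Cy, Q; auto).
    rewrite <- (proj2 Hcons Y1). rewrite Y1, Q in Rel1. eapply E_inj; eauto.
Qed.

(** The union of the entries of same-coloured conditions is matched by their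
    common bijection and consistent by [align]; raising the level separates it. *)
Lemma valid_amalgamate c0 (l : list cond) : valid E c0 ->
  (forall p, In p l -> valid E p /\ color p = color c0) ->
  exists r, valid E r /\ forall p, In p (c0 :: l) -> cle r p.
Proof.
  intros V0 Hl.
  assert (Hall : forall p, In p (c0 :: l) -> valid E p /\ lv p = lv c0 /\
      (forall u, length u = lv c0 -> sg p u = sg c0 u) /\
      map (entry_code (lv c0)) (es p) = map (entry_code (lv c0)) (es c0)).
  { intros p Hp. assert (Hpc : valid E p /\ color p = color c0)
      by (destruct Hp as [<-|Hp]; auto).
    destruct Hpc as [Vp Hc]. apply color_eq in Hc. destruct Hc as [C1 [C2 C3]].
    rewrite <- C1. auto. }
  set (F := flat_map es (c0 :: l)).
  assert (HF : forall e, In e F -> exists p, In p (c0 :: l) /\ In e (es p))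
    by (intros e He; apply in_flat_map in He; destruct He as [p [? ?]]; eauto).
  assert (HmF : matched (lv c0) (sg c0) F).
  { intros e He. destruct (HF e He) as [p [Hp Hep]]. destruct (Hall p Hp) as [Vp [Q1 [Q2 _]]].
    rewrite <- Q2 by apply length_pre. rewrite <- Q1. apply (valid_match E p Vp), Hep. }
  assert (HcF : consistent F).
  { intros e1 e2 H1 H2. destruct (HF e1 H1) as [p [Hp Hep]]. destruct (HF e2 H2) as [q [Hq Heq]].
    destruct (Hall p Hp) as [Vp [P1 [_ P3]]]. destruct (Hall q Hq) as [Vq [_ [_ Q3]]].
    apply (align p (es q)); auto; [exact (valid_rel E q Vq)|rewrite P1, P3, Q3; auto]. }
  destruct (raise (lv c0) (sg c0) (tg c0) F [] [] 0 (valid_bij E c0 V0) HmF HcF)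
    as [n' [s' [t' [Hn [_ [Hb [Hr [Hm [HsX HsY]]]]]]]]].
  rewrite app_nil_r in HsX, HsY.
  exists (mkC n' s' t' F). split.
  - split; simpl; auto. intros e He. destruct (HF e He) as [p [Hp Hep]].
    exact (valid_rel E p (proj1 (Hall p Hp)) e Hep).
  - intros p Hp. destruct (Hall p Hp) as [Vp [Q1 [Q2 _]]].
    split; simpl; [lia|split].
    + intros u Hu. rewrite Q1, Hr, Q2 by (auto; rewrite length_firstn; lia). reflexivity.
    + intros e He. apply in_flat_map. eauto.
Qed.

Lemma valid_sigma_centered :
  sigma_centered (fun q p : {p : cond | valid E p} => cle (proj1_sig q) (proj1_sig p)).
Proof.
  exists (fun p => color (proj1_sig p)). intros n [|p0 l] Hl.
  - assert (V : valid E (mkC 0 (fun u => u) (fun u => u) [])).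
    { split; simpl; [intros u Hu; auto|intros ? []|intros ? []|intros ? ? []|intros ? ? []]. }
    exists (exist _ _ V). intros _ [].
  - destruct (valid_amalgamate (proj1_sig p0) (map (@proj1_sig _ _) l) (proj2_sig p0))
      as [r [Vr Hr]].
    { intros p Hp. apply in_map_iff in Hp. destruct Hp as [p' [<- Hp']].
      split; [exact (proj2_sig p')|]. rewrite (Hl p'), (Hl p0); simpl; auto. }
    exists (exist _ r Vr). intros p [<-|Hp]; apply Hr; simpl; auto using in_map.
Qed.

End Amalgamation.

Lemma pre_eq_cofinal x y : (forall N, exists n, N <= n /\ pre n x = pre n y) -> x = y.
Proof.
  intro H. apply pre_ext. intro m. destruct (H m) as [n [Hmn Hn]].
  rewrite <- (firstn_pre m n x), <- (firstn_pre m n y), Hn by exact Hmn. reflexivity.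
Qed.

Lemma nth_refines n n' s s' x i : n <= n' -> i < n -> refines n n' s s' ->
  nth i (s (pre n x)) false = nth i (s' (pre n' x)) false.
Proof.
  intros Hn Hi Hr. rewrite <- (firstn_pre n n' x Hn), <- Hr by apply length_pre.
  rewrite nth_firstn. replace (i <? n) with true by (symmetry; apply Nat.ltb_lt, Hi). reflexivity.
Qed.

Lemma cle_refines_tg E c c' : valid E c -> valid E c' -> cle c' c ->
  refines (lv c) (lv c') (tg c) (tg c').
Proof.
  intros Vc Vc' [Hl [Hr _]] u Hu.
  destruct (valid_bij E c' Vc' u Hu) as [_ [A2 [_ A4]]].
  assert (Hf : length (firstn (lv c) (tg c' u)) = lv c) by (rewrite length_firstn; lia).
  destruct (valid_bij E c Vc _ Hf) as [_ [_ [B3 _]]].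
  rewrite <- B3, <- Hr, A4 by exact A2. reflexivity.
Qed.

Section Limit.
Variables (E : Rel) (G : cond -> Prop).
Hypothesis G_valid : forall p, G p -> valid E p.
Hypothesis G_directed : forall p q, G p -> G q -> exists r, G r /\ cle r p /\ cle r q.
Hypothesis G_unbounded : forall N, exists p, G p /\ N <= lv p.

Lemma limit_map (sigma : cond -> list bool -> list bool) :
  (forall p, G p -> forall u, length u = lv p -> length (sigma p u) = lv p) ->
  (forall p q, G p -> G q -> cle q p -> refines (lv p) (lv q) (sigma p) (sigma q)) ->
  exists h : Cantor -> Cantor, continuous h /\
    forall p, G p -> forall x, pre (lv p) (h x) = sigma p (pre (lv p) x).
Proof.
  intros Hlen Hcoh.
  destruct (choice_dep (fun i p => G p /\ S i <= lv p)) as [pk Hpk].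
  { intro i. apply G_unbounded. }
  set (h := fun x i => nth i (sigma (pk i) (pre (lv (pk i)) x)) false).
  assert (Hh : forall p, G p -> forall x, pre (lv p) (h x) = sigma p (pre (lv p) x)).
  { intros p Hp x. apply nth_ext with (d := false) (d' := false).
    { rewrite length_pre, Hlen by (auto using length_pre). reflexivity. }
    intros i Hi. rewrite length_pre in Hi. rewrite nth_pre by exact Hi.
    destruct (Hpk i) as [Hpi Hli]. destruct (G_directed _ _ Hp Hpi) as [r [Hr [Hrp Hrpi]]].
    unfold h. rewrite (nth_refines _ _ _ _ x i (proj1 Hrpi) ltac:(lia) (Hcoh _ _ Hpi Hr Hrpi)).
    symmetry. apply (nth_refines _ _ _ _ x i (proj1 Hrp) Hi (Hcoh _ _ Hp Hr Hrp)). }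
  exists h. split; [|exact Hh].
  intros U HU x Hx. destruct (HU _ Hx) as [m Hm].
  destruct (G_unbounded m) as [p [Hp Hmp]]. exists (lv p). intros z Hz. apply Hm.
  apply agree_pre in Hz.
  assert (Q : pre (lv p) (h x) = pre (lv p) (h z)) by (rewrite !(Hh p Hp), Hz; reflexivity).
  intros i Hi. apply (pre_agree _ _ _ Q). lia.
Qed.

Lemma G_eq x y : (forall p, G p -> pre (lv p) x = pre (lv p) y) -> x = y.
Proof.
  intro H. apply pre_eq_cofinal. intro N. destruct (G_unbounded N) as [p [Hp HN]]. eauto.
Qed.

(** The limits of the [sg] and of the [tg] are mutually inverse; the limit of
    the [sg] honours every entry of [G]. *)
Lemma limit_homeomorphism :
  exists f, homeomorphism f /\ forall p e, G p -> In e (es p) -> f (ex e) = ey e.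
Proof.
  destruct (limit_map sg) as [f [Hfc Hf]].
  { intros p Hp u Hu. apply (valid_bij E p (G_valid p Hp) u Hu). }
  { intros p q _ _ Hqp. apply Hqp. }
  destruct (limit_map tg) as [g [Hgc Hg]].
  { intros p Hp u Hu. apply (valid_bij E p (G_valid p Hp) u Hu). }
  { intros p q Hp Hq Hqp. apply (cle_refines_tg E); auto. }
  exists f. split; [split; [exact Hfc|exists g; split; [exact Hgc|split]]|].
  - intro x. apply G_eq. intros p Hp. rewrite Hg, Hf by exact Hp.
    apply (valid_bij E p (G_valid p Hp)), length_pre.
  - intro y. apply G_eq. intros p Hp. rewrite Hf, Hg by exact Hp.
    apply (valid_bij E p (G_valid p Hp)), length_pre.
  - intros p e Hp He. apply pre_eq_cofinal. intro N.
    destruct (G_unbounded N) as [q [Hq HN]].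
    destruct (G_directed _ _ Hp Hq) as [r [Hr [Hrp Hrq]]].
    exists (lv r). split; [destruct Hrq; lia|].
    rewrite Hf by exact Hr. apply (valid_match E r (G_valid r Hr)), (proj2 (proj2 Hrp)), He.
Qed.

End Limit.

Lemma generic_homeomorphism (MA : MA_sigma_centered) (E : Rel)
  (E_fun : forall u v x y1 y2, E u v x y1 -> E u v x y2 -> y1 = y2)
  (E_inj : forall u v x1 x2 y, E u v x1 y -> E u v x2 y -> x1 = x2)
  (SA SB : Cantor -> Prop)
  (RA : forall x, SA x -> forall w, exists y u v, E u v x y /\ cone w y)
  (RB : forall y, SB y -> forall w, exists x u v, E u v x y /\ cone w x)
  (HI : card_lt (({x | SA x} + {y | SB y}) + nat) Cantor) :
  exists f, homeomorphism f /\ (forall x, SA x -> exists u v, E u v x (f x)) /\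
    (forall y, SB y -> exists x u v, E u v x y /\ f x = y).
Proof.
  set (PE := {p : cond | valid E p}).
  set (ple := fun q p : PE => cle (proj1_sig q) (proj1_sig p)).
  set (D := fun (i : ({x | SA x} + {y | SB y}) + nat) (p : PE) =>
    match i with
    | inl (inl x) => exists e, In e (es (proj1_sig p)) /\ ex e = proj1_sig x
    | inl (inr y) => exists e, In e (es (proj1_sig p)) /\ ey e = proj1_sig y
    | inr N => N <= lv (proj1_sig p) end).
  destruct (MA_preorder MA PE ple) with (D := D) as [G [Hdir Hmeet]].
  - intros [c V]. apply (cle_refl E c V).
  - intros p q r. apply cle_trans.
  - apply valid_sigma_centered; assumption.
  - exact HI.
  - intros [[[x Hx]|[y Hy]]|N] [c V]; simpl.
    + destruct (dense_source E SA RA c x Hx V) as [q [Vq [H1 H2]]]. exists (exist _ q Vq). auto.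
    + destruct (dense_target E SB RB c y Hy V) as [q [Vq [H1 H2]]]. exists (exist _ q Vq). auto.
    + destruct (dense_level E c N V) as [q [Vq [H1 H2]]]. exists (exist _ q Vq). auto.
  - set (G' := fun c => exists V : valid E c, G (exist _ c V)).
    destruct (limit_homeomorphism E G') as [f [Hf Hent]].
    + intros c [V _]. exact V.
    + intros c c' [V HV] [V' HV']. destruct (Hdir _ _ HV HV') as [[r Vr] [Hr [H1 H2]]].
      exists r. split; [exists Vr|split]; auto.
    + intro N. destruct (Hmeet (inr N)) as [[c V] [HG HN]]. exists c. split; [exists V|]; auto.
    + exists f. split; [exact Hf|split].
      * intros x Hx. destruct (Hmeet (inl (inl (exist _ x Hx)))) as [[c V] [HG [e [He Hex]]]].
        simpl in Hex. subst x.
        exists (eu e), (ev e). rewrite (Hent c e (ex_intro _ V HG) He).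
        exact (valid_rel E c V e He).
      * intros y Hy. destruct (Hmeet (inl (inr (exist _ y Hy)))) as [[c V] [HG [e [He Hey]]]].
        simpl in Hey. subst y.
        exists (ex e), (eu e), (ev e). split; [exact (valid_rel E c V e He)|].
        exact (Hent c e (ex_intro _ V HG) He).
Qed.

(** Fixing for each class [a] and each cone [u]
    an enumeration of [A a ∩ cone u] by [L a], and likewise for [B], the
    labelled pairing [x ~(u,v) y] ("x and y are in classes A_a and B_a and
    have the same index in the enumerations of their cones u and v") is a
    partial injection for fixed labels, and each point is paired with points in
    every cone, since all these enumerations have the same index set [L a]. *)

Lemma cone_enumerations (K : Type) (L : K -> Type) (C : K -> Cantor -> Prop) :
  (forall a, infinite_type (L a)) -> (forall a, dense_card (L a) (C a)) ->
  exists phi : forall a, list bool -> Cantor -> L a,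
    (forall a u x y, C a x -> cone u x -> C a y -> cone u y -> phi a u x = phi a u y -> x = y) /\
    (forall a u l, exists x, C a x /\ cone u x /\ phi a u x = l).
Proof.
  intros Hinf Hd.
  destruct (choice_dep (fun (au : K * list bool) (phi : Cantor -> L (fst au)) =>
      (forall x y, C (fst au) x -> cone (snd au) x -> C (fst au) y -> cone (snd au) y ->
         phi x = phi y -> x = y) /\
      (forall l, exists x, C (fst au) x /\ cone (snd au) x /\ phi x = l))) as [phi Hphi].
  - intros [a u]. simpl.
    destruct (Hd a (cone u) (cone_open u) (cone_nonempty u)) as [h [Hinj Hsurj]].
    destruct (Hinf a) as [l0 _].
    exists (fun x => match excluded_middle_informative (C a x /\ cone u x) with
                    | left H => h (exist _ x H) | right _ => l0 0 end).
    split.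
    + intros x y Hx Hux Hy Huy.
      destruct (excluded_middle_informative (C a x /\ cone u x)) as [Hxu|]; [|tauto].
      destruct (excluded_middle_informative (C a y /\ cone u y)) as [Hyu|]; [|tauto].
      intro E. exact (f_equal (@proj1_sig _ _) (Hinj _ _ E)).
    + intro l. destruct (Hsurj l) as [[x Hxu] <-]. exists x. split; [apply Hxu|split; [apply Hxu|]].
      destruct (excluded_middle_informative (C a x /\ cone u x)) as [Hxu'|]; [|tauto].
      f_equal. f_equal. apply proof_irrelevance.
  - exists (fun a u => phi (a, u)). split.
    + intros a u. exact (proj1 (Hphi (a, u))).
    + intros a u. exact (proj2 (Hphi (a, u))).
Qed.

Lemma same_class {K : Type} (A : K -> Cantor -> Prop)
  (dA : forall a b x, a <> b -> A a x -> A b x -> False) a b x : A a x -> A b x -> a = b.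
Proof. intros H1 H2. apply NNPP. intro Hne. exact (dA a b x Hne H1 H2). Qed.

Section Pairing.
Variables (K : Type) (L : K -> Type) (A B : K -> Cantor -> Prop).
Hypothesis dA : forall a b x, a <> b -> A a x -> A b x -> False.
Hypothesis dB : forall a b x, a <> b -> B a x -> B b x -> False.
Variables (phiA phiB : forall a, list bool -> Cantor -> L a).
Hypothesis phiA_inj :
  forall a u x y, A a x -> cone u x -> A a y -> cone u y -> phiA a u x = phiA a u y -> x = y.
Hypothesis phiB_inj :
  forall a u x y, B a x -> cone u x -> B a y -> cone u y -> phiB a u x = phiB a u y -> x = y.
Hypothesis phiA_onto : forall a u l, exists x, A a x /\ cone u x /\ phiA a u x = l.
Hypothesis phiB_onto : forall a u l, exists x, B a x /\ cone u x /\ phiB a u x = l.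

Definition pairing : Rel := fun u v x y =>
  exists a, A a x /\ cone u x /\ B a y /\ cone v y /\ phiA a u x = phiB a v y.

Lemma pairing_fun u v x y1 y2 : pairing u v x y1 -> pairing u v x y2 -> y1 = y2.
Proof.
  intros [a [Ax [Ux [By1 [Vy1 E1]]]]] [b [Bx [_ [By2 [Vy2 E2]]]]].
  rewrite <- (same_class A dA a b x Ax Bx) in By2, E2.
  apply (phiB_inj a v); auto. congruence.
Qed.

Lemma pairing_inj u v x1 x2 y : pairing u v x1 y -> pairing u v x2 y -> x1 = x2.
Proof.
  intros [a [Ax1 [Ux1 [By [Vy E1]]]]] [b [Ax2 [Ux2 [By' [_ E2]]]]].
  rewrite <- (same_class B dB a b y By By') in Ax2, E2.
  apply (phiA_inj a u); auto. congruence.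
Qed.

Lemma pairing_rich_A x : (exists a, A a x) -> forall w, exists y u v, pairing u v x y /\ cone w y.
Proof.
  intros [a Ax] w. destruct (phiB_onto a w (phiA a [] x)) as [y [By [Wy Ey]]].
  exists y, [], w. split; [|exact Wy]. exists a. repeat split; auto.
Qed.

Lemma pairing_rich_B y : (exists a, B a y) -> forall w, exists x u v, pairing u v x y /\ cone w x.
Proof.
  intros [a By] w. destruct (phiA_onto a w (phiB a [] y)) as [x [Ax [Wx Ex]]].
  exists x, w, []. split; [|exact Wx]. exists a. repeat split; auto.
Qed.

Lemma pairing_class u v x y a : pairing u v x y -> (A a x <-> B a y).
Proof.
  intros [b [Ax [_ [By _]]]]. split; intro H.
  - rewrite (same_class A dA a b x H Ax). exact By.
  - rewrite (same_class B dB a b y H By). exact Ax.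
Qed.

End Pairing.

Lemma dense_card_le (L : Type) (D : Cantor -> Prop) : dense_card L D -> card_le {x | D x} L.
Proof.
  intro Hd. destruct (Hd (fun _ => True)) as [h [Hh _]].
  - intros x _. exists 0. auto.
  - exists (fun _ => true). exact I.
  - exists (fun x => h (exist _ (proj1_sig x) (conj (proj2_sig x) I))).
    intros [x Hx] [y Hy] E. apply Hh in E. injection E as ->. f_equal. apply proof_irrelevance.
Qed.

Lemma union_lt (MA : MA_sigma_centered) (K : Type) (L : K -> Type) (C : K -> Cantor -> Prop) :
  card_lt K Cantor -> (forall a, card_lt (L a) Cantor) -> (forall a, dense_card (L a) (C a)) ->
  card_lt {x | exists a, C a x} Cantor.
Proof.
  intros HK HL Hd. apply (card_lt_of_le _ {a : K & {x | C a x}}).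
  - destruct (choice_dep (fun (x : {x | exists a, C a x}) a => C a (proj1_sig x))) as [cl Hcl].
    { intros [x Hx]. exact Hx. }
    exists (fun x => existT (fun a => {x | C a x}) (cl x) (exist _ (proj1_sig x) (Hcl x))).
    intros [x Hx] [y Hy] E.
    apply (f_equal (fun s : {a : K & {x | C a x}} => proj1_sig (projT2 s))) in E. simpl in E.
    subst. f_equal. apply proof_irrelevance.
  - apply MA_sigma_lt; [exact MA|exact HK|].
    intro a. apply (card_lt_of_le _ (L a)); [apply dense_card_le, Hd|apply HL].
Qed.

Theorem corollary2p2 :
  MA_sigma_centered ->
  forall (K : Type) (L : K -> Type) (A B : K -> Cantor -> Prop),
    card_lt K Cantor ->
    (forall a, infinite_type (L a) /\ card_lt (L a) Cantor) ->
    (forall a, dense_card (L a) (A a) /\ dense_card (L a) (B a)) ->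
    (forall a b x, a <> b -> A a x -> A b x -> False) ->
    (forall a b x, a <> b -> B a x -> B b x -> False) ->
    exists f : Cantor -> Cantor, homeomorphism f /\
      forall a y, image f (A a) y <-> B a y.
Proof.
  intros MA K L A B HK HL Hd dA dB.
  destruct (cone_enumerations K L A) as [phiA [phiA_inj phiA_onto]];
    [intro a; apply HL|intro a; apply Hd|].
  destruct (cone_enumerations K L B) as [phiB [phiB_inj phiB_onto]];
    [intro a; apply HL|intro a; apply Hd|].
  set (E := pairing K L A B phiA phiB).
  assert (HI : card_lt (({x | exists a, A a x} + {y | exists a, B a y}) + nat) Cantor).
  { apply sum_nat_lt, sum_lt; [exact MA| |];
      apply (union_lt MA K L); auto; intro a; apply HL || apply Hd. }
  destruct (generic_homeomorphism MA E (pairing_fun _ _ _ _ dA _ _ phiB_inj)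
              (pairing_inj _ _ _ _ dB _ _ phiA_inj) _ _
              (pairing_rich_A _ _ _ _ _ _ phiB_onto)
              (pairing_rich_B _ _ _ _ _ _ phiA_onto) HI) as [f [Hf [HfA HfB]]].
  exists f. split; [exact Hf|]. intros a y. split.
  - intros [x [Ax <-]]. destruct (HfA x (ex_intro _ a Ax)) as [u [v Exy]].
    apply (pairing_class _ _ _ _ dA dB _ _ u v x (f x) a Exy), Ax.
  - intro By. destruct (HfB y (ex_intro _ a By)) as [x [u [v [Exy <-]]]].
    exists x. split; [|reflexivity].
    apply (pairing_class _ _ _ _ dA dB _ _ u v x (f x) a Exy), By.
Qed.
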